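(* Let $f$ and $F$ be the density and CDF of the standard Gaussian distribution. For every $\alpha\in(0,1)$ and every $z\in\mathbb{R}$, $$\frac{f(z)|z|^\alpha}{(1-F(z))^{1-\alpha}} \le \frac{2}{\alpha}.$$ *)

From Stdlib Require Import Reals Lra.
From Coquelicot Require Import Coquelicot.
Open Scope R_scope.

Definition gauss_pdf (x : R) : R := exp (- x ^ 2 / 2) / sqrt (2 * PI).

Definition gauss_cdf (z : R) : R :=
  RInt_gen gauss_pdf (Rbar_locally m_infty) (at_point z).

(* |x|^a for a > 0, with the convention 0^a = 0 *)
Definition abs_rpow (x a : R) : R :=
  if Req_EM_T x 0 then 0 else Rpower (Rabs x) a.

From Stdlib Require Import Reals Lra Classical.
From Coquelicot Require Import Coquelicot.
Open Scope R_scope.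

(* Write Q = 1 - F. Feynman's trick shows that (int_0^x e^(-t^2/2) dt)^2
   + 2 int_0^1 e^(-x^2 (1+t^2)/2) / (1+t^2) dt has zero derivative, hence is
   constantly pi/2; so the Gaussian has mass at most 1/2 on each side of 0.
   Consequently Q(z) >= 1/2 - c/sqrt(2 pi) for z <= c, and Q(z) dominates
   every integral of f over [z, t], which with the derivative of
   -x f(x)/(1+x^2) being at most f gives the Mills-ratio bound
   Q(z) >= M(z) := z f(z)/(1+z^2) for z > 0.
   For z <= 5/7: f(z) |z|^a <= 1/sqrt(2 pi) <= 2 Q <= 2 Q^(1-a).
   For z > 5/7: f z^a = M^(1-a) f^a z (1 + 1/z^2)^(1-a), and
   a z f^a <= a z e^(-a z^2/2) <= 2/3, 1 + 1/z^2 <= 74/25, so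
   a f z^a <= 2 M^(1-a) <= 2 Q^(1-a). *)

Definition gauss (t : R) : R := exp (- t ^ 2 / 2).

Definition gauss_int (x : R) : R := RInt gauss 0 x.

Definition feynman (x t : R) : R := exp (- (x ^ 2 * (1 + t ^ 2)) / 2) / (1 + t ^ 2).

Definition feynman_int (x : R) : R := RInt (feynman x) 0 1.

Lemma one_add_sqr_gt0 (t : R) : 0 < 1 + t ^ 2.
Proof. nra. Qed.

Lemma continuous_gauss (x : R) : continuous gauss x.
Proof.
  apply (ex_derive_continuous (K := R_AbsRing) (V := R_NormedModule)).
  unfold gauss; auto_derive; auto.
Qed.

Lemma ex_RInt_gauss (a b : R) : ex_RInt gauss a b.
Proof.
  apply (ex_RInt_continuous (V := R_CompleteNormedModule)); intros; apply continuous_gauss.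
Qed.

Lemma is_derive_gauss_int (x : R) : is_derive gauss_int x (gauss x).
Proof.
  apply is_derive_RInt with (a := 0).
  - apply filter_forall; intros; apply (RInt_correct (V := R_CompleteNormedModule)), ex_RInt_gauss.
  - apply continuous_gauss.
Qed.

Lemma is_derive_feynman (x t : R) :
  is_derive (fun u => feynman u t) x (- x * exp (- (x ^ 2 * (1 + t ^ 2)) / 2)).
Proof.
  unfold feynman; auto_derive; [easy |].
  replace (- (x * (x * 1) * (1 + t * (t * 1))) * / 2) with (- (x ^ 2 * (1 + t ^ 2)) / 2)
    by field.
  field; generalize (one_add_sqr_gt0 t); lra.
Qed.

Lemma ex_RInt_feynman (x a b : R) : ex_RInt (feynman x) a b.
Proof.
  apply (ex_RInt_continuous (V := R_CompleteNormedModule)); intros t _.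
  apply (ex_derive_continuous (K := R_AbsRing) (V := R_NormedModule)).
  unfold feynman; auto_derive; generalize (one_add_sqr_gt0 t); lra.
Qed.

Lemma continuity_2d_pt_feynman_derive (x t : R) :
  continuity_2d_pt (fun u v => Derive (fun z => feynman z v) u) x t.
Proof.
  apply continuity_2d_pt_ext with (f := fun u v => - u * exp (- (u ^ 2 * (1 + v ^ 2)) / 2)).
  { intros u v; symmetry; apply is_derive_unique, is_derive_feynman. }
  apply continuity_2d_pt_mult.
  - apply continuity_2d_pt_opp, continuity_2d_pt_id1.
  - apply continuity_1d_2d_pt_comp.
    { apply derivable_continuous_pt, derivable_pt_exp. }
    apply continuity_2d_pt_ext with (f := fun u v => u * u * (1 + v * v) * (- / 2)).
    { intros; simpl; field. }
    apply continuity_2d_pt_mult; [| apply continuity_2d_pt_const].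
    apply continuity_2d_pt_mult.
    + apply continuity_2d_pt_mult; apply continuity_2d_pt_id1.
    + apply continuity_2d_pt_plus; [apply continuity_2d_pt_const |].
      apply continuity_2d_pt_mult; apply continuity_2d_pt_id2.
Qed.

Lemma is_derive_feynman_int (x : R) : is_derive feynman_int x (- gauss x * gauss_int x).
Proof.
  replace (- gauss x * gauss_int x) with (RInt (fun t => Derive (fun u => feynman u t) x) 0 1).
  { apply is_derive_RInt_param.
    - apply filter_forall; intros y t _; eexists; apply is_derive_feynman.
    - intros; apply continuity_2d_pt_feynman_derive.
    - apply filter_forall; intros; apply ex_RInt_feynman. }
  (* the substitution [s = x t] turns the integrand into a multiple of [gauss] *)
  rewrite (RInt_ext (V := R_CompleteNormedModule)) with
    (g := fun t => scal (- gauss x) (scal x (gauss (x * t + 0)))).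
  - rewrite (RInt_scal (V := R_CompleteNormedModule)).
    2: apply (ex_RInt_comp_lin (V := R_CompleteNormedModule)), ex_RInt_gauss.
    rewrite (RInt_comp_lin (V := R_CompleteNormedModule)) by apply ex_RInt_gauss.
    unfold gauss_int; rewrite Rmult_0_r, Rmult_1_r, !Rplus_0_r; reflexivity.
  - intros t _; erewrite is_derive_unique by apply is_derive_feynman.
    change (- x * exp (- (x ^ 2 * (1 + t ^ 2)) / 2) = - gauss x * (x * gauss (x * t + 0))).
    unfold gauss.
    replace (- (x ^ 2 * (1 + t ^ 2)) / 2) with (- x ^ 2 / 2 + - (x * t + 0) ^ 2 / 2) by field.
    rewrite exp_plus; ring.
Qed.

Lemma is_derive_zero_const (f : R -> R) :
  (forall x, is_derive f x 0) -> forall x, f x = f 0.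
Proof.
  intros Hf x.
  assert (H : is_RInt (fun _ => 0) 0 x (minus (f x) (f 0))).
  { apply (is_RInt_derive (V := R_CompleteNormedModule));
      intros; [apply Hf | apply continuous_const]. }
  apply (is_RInt_unique (V := R_CompleteNormedModule)) in H.
  rewrite (RInt_const (V := R_CompleteNormedModule)) in H.
  unfold minus, plus, opp, scal in H; simpl in H; unfold mult in H; simpl in H. lra.
Qed.

Lemma feynman_int0 : feynman_int 0 = PI / 4.
Proof.
  unfold feynman_int.
  rewrite (RInt_ext (V := R_CompleteNormedModule)) with (g := fun t => / (1 + t ^ 2)).
  - rewrite (is_RInt_unique (V := R_CompleteNormedModule) _ _ _ (minus (atan 1) (atan 0))).
    { rewrite atan_1, atan_0; unfold minus, plus, opp; simpl; lra. }
    apply (is_RInt_derive (V := R_CompleteNormedModule)); intros t _.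
    + apply is_derive_Reals, derivable_pt_lim_atan.
    + apply (ex_derive_continuous (K := R_AbsRing) (V := R_NormedModule)).
      auto_derive; generalize (one_add_sqr_gt0 t); lra.
  - intros t _; unfold feynman.
    replace (- (0 ^ 2 * (1 + t ^ 2)) / 2) with 0 by field.
    rewrite exp_0; unfold Rdiv; apply Rmult_1_l.
Qed.

Lemma gauss_int_sqr_add_feynman_int (x : R) : gauss_int x ^ 2 + 2 * feynman_int x = PI / 2.
Proof.
  rewrite (is_derive_zero_const (fun y => gauss_int y ^ 2 + 2 * feynman_int y)).
  - unfold gauss_int at 1; rewrite (RInt_point (V := R_CompleteNormedModule)), feynman_int0.
    unfold zero; simpl; field.
  - intros y; replace 0 with (INR 2 * gauss y * gauss_int y ^ 1 + 2 * (- gauss y * gauss_int y))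
      by (simpl; ring).
    apply (is_derive_plus (K := R_AbsRing) (V := R_NormedModule)).
    + apply (is_derive_pow gauss_int 2 y (gauss y)), is_derive_gauss_int.
    + apply (is_derive_scal feynman_int y 2), is_derive_feynman_int.
Qed.

Lemma gauss_int_sqr_le (x : R) : gauss_int x ^ 2 <= PI / 2.
Proof.
  assert (0 <= feynman_int x).
  { apply RInt_ge_0; [lra | apply ex_RInt_feynman |].
    intros t _; apply Rlt_le, Rdiv_lt_0_compat; [apply exp_pos | apply one_add_sqr_gt0]. }
  generalize (gauss_int_sqr_add_feynman_int x); lra.
Qed.

(* [17/7 = 1 + 2 * 5/7] is what the estimate for [z <= 5/7] needs. *)
Lemma sqrt_2PI_ge : 17 / 7 <= sqrt (2 * PI).
Proof.
  rewrite <- (sqrt_pow2 (17 / 7)) by lra.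
  apply sqrt_le_1_alt; generalize PI2_3_2; lra.
Qed.

Lemma gauss_int_sub (x y : R) : gauss_int y - gauss_int x = RInt gauss x y.
Proof.
  unfold gauss_int; rewrite <- (RInt_Chasles (V := R_CompleteNormedModule) gauss 0 x y)
    by apply ex_RInt_gauss.
  unfold plus; simpl; ring.
Qed.

Lemma gauss_int_le_mono (x y : R) : x <= y -> gauss_int x <= gauss_int y.
Proof.
  intros Hxy; enough (0 <= RInt gauss x y) by (rewrite <- gauss_int_sub in *; lra).
  apply RInt_ge_0; [easy | apply ex_RInt_gauss | intros; apply Rlt_le, exp_pos].
Qed.

Lemma gauss_mul_one_add_le1 (x : R) : gauss x * (1 + x ^ 2 / 2) <= 1.
Proof.
  unfold gauss; replace (- x ^ 2 / 2) with (- (x ^ 2 / 2)) by field.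
  rewrite exp_Ropp; generalize (exp_ineq1_le (x ^ 2 / 2)) (exp_pos (x ^ 2 / 2)); intros.
  apply Rmult_le_reg_l with (exp (x ^ 2 / 2)); [easy |].
  rewrite <- Rmult_assoc, Rinv_r; lra.
Qed.

Lemma gauss_le1 (x : R) : gauss x <= 1.
Proof. generalize (gauss_mul_one_add_le1 x) (exp_pos (- x ^ 2 / 2)); unfold gauss; nra. Qed.

Lemma gauss_int_le_id (x : R) : 0 <= x -> gauss_int x <= x.
Proof.
  intros Hx; unfold gauss_int.
  apply Rle_trans with (RInt (fun _ => 1) 0 x).
  - apply RInt_le; [easy | apply ex_RInt_gauss | apply ex_RInt_const |].
    intros; apply gauss_le1.
  - rewrite (RInt_const (V := R_CompleteNormedModule)); unfold scal; simpl; unfold mult; simpl; lra.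
Qed.

Lemma gauss_int_abs_le (x : R) : 2 * Rabs (gauss_int x) <= sqrt (2 * PI).
Proof.
  rewrite <- (sqrt_pow2 (2 * Rabs (gauss_int x))) by (generalize (Rabs_pos (gauss_int x)); lra).
  apply sqrt_le_1_alt.
  rewrite Rpow_mult_distr, pow2_abs; generalize (gauss_int_sqr_le x); lra.
Qed.

Lemma gauss_pdfE (x : R) : gauss_pdf x = gauss x / sqrt (2 * PI).
Proof. reflexivity. Qed.

Lemma RInt_gauss_pdf (a b : R) :
  RInt gauss_pdf a b = (gauss_int b - gauss_int a) / sqrt (2 * PI).
Proof.
  rewrite gauss_int_sub.
  rewrite (RInt_ext (V := R_CompleteNormedModule)) with
    (g := fun x => scal (/ sqrt (2 * PI)) (gauss x)) by (intros; apply Rmult_comm).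
  rewrite (RInt_scal (V := R_CompleteNormedModule)) by apply ex_RInt_gauss.
  apply Rmult_comm.
Qed.

Lemma ex_RInt_gauss_pdf (a b : R) : ex_RInt gauss_pdf a b.
Proof.
  apply (ex_RInt_ext (V := R_CompleteNormedModule)) with
    (f := fun x => scal (/ sqrt (2 * PI)) (gauss x)); [intros; apply Rmult_comm |].
  apply (ex_RInt_scal (V := R_CompleteNormedModule)), ex_RInt_gauss.
Qed.

Lemma gauss_pdf_pos (x : R) : 0 < gauss_pdf x.
Proof.
  apply Rdiv_lt_0_compat; [apply exp_pos | generalize sqrt_2PI_ge; lra].
Qed.

Lemma gauss_pdf_le_gauss (x : R) : gauss_pdf x <= gauss x.
Proof.
  rewrite gauss_pdfE; generalize sqrt_2PI_ge (exp_pos (- x ^ 2 / 2)); unfold gauss; intros.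
  apply Rle_div_l; nra.
Qed.

Section LeftImproperIntegral.

Variables (f : R -> R) (b l : R).
Hypothesis f_int : forall a c, ex_RInt f a c.
Hypothesis f_ge0 : forall x, 0 <= f x.
Hypothesis l_lub : is_lub (fun y => exists a, a <= b /\ y = RInt f a b) l.

Lemma is_RInt_gen_m_infty_lub : is_RInt_gen f (Rbar_locally m_infty) (at_point b) l.
Proof.
  intros P [eps HP].
  assert (Ha0 : exists a0, a0 <= b /\ l - eps < RInt f a0 b).
  { apply NNPP; intros Hn.
    enough (l <= l - eps) by (destruct eps; simpl in *; lra).
    apply l_lub; intros y [a [Ha ->]].
    apply Rnot_lt_le; intros Hlt; apply Hn; eauto. }
  destruct Ha0 as [a0 [Ha0 Hlt]].
  apply Filter_prod with (Q := fun a => a < a0) (R := fun c => c = b);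
    [now exists a0 | reflexivity |].
  intros a c Ha Hc; subst c; exists (RInt f a b); split;
    [apply (RInt_correct (V := R_CompleteNormedModule)), f_int |].
  apply HP; change (Rabs (RInt f a b - l) < eps).
  assert (Hle : RInt f a b <= l) by (apply l_lub; exists a; split; [lra | easy]).
  assert (Hmono : 0 <= RInt f a a0)
    by (apply RInt_ge_0; [lra | apply f_int | intros; apply f_ge0]).
  rewrite <- (RInt_Chasles (V := R_CompleteNormedModule) f a a0 b) in Hle |- *
    by apply f_int.
  unfold plus in *; simpl in *; apply Rabs_def1; lra.
Qed.

End LeftImproperIntegral.

Lemma RInt_gauss_pdf_le (a z : R) :
  RInt gauss_pdf a z <= 1 / 2 + gauss_int z / sqrt (2 * PI).
Proof.
  assert (Ha : - gauss_int a <= sqrt (2 * PI) / 2).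
  { generalize (gauss_int_abs_le a) (Rle_abs (- gauss_int a)); rewrite Rabs_Ropp; lra. }
  generalize sqrt_2PI_ge; intros Hs.
  rewrite RInt_gauss_pdf.
  replace ((gauss_int z - gauss_int a) / sqrt (2 * PI))
    with (- gauss_int a / sqrt (2 * PI) + gauss_int z / sqrt (2 * PI)) by (field; lra).
  apply Rplus_le_compat_r, Rle_div_l; lra.
Qed.

Lemma gauss_cdf_lub (z : R) :
  is_lub (fun y => exists a, a <= z /\ y = RInt gauss_pdf a z) (gauss_cdf z).
Proof.
  destruct (upper_bound_thm (fun y => exists a, a <= z /\ y = RInt gauss_pdf a z)) as [l Hl].
  - exists (1 / 2 + gauss_int z / sqrt (2 * PI)); intros y [a [_ ->]]; apply RInt_gauss_pdf_le.
  - exists (RInt gauss_pdf z z), z; split; [lra | easy].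
  - replace (gauss_cdf z) with l; [easy |]; symmetry.
    apply (is_RInt_gen_unique (V := R_CompleteNormedModule)), is_RInt_gen_m_infty_lub; try easy.
    + apply ex_RInt_gauss_pdf.
    + intros; apply Rlt_le, gauss_pdf_pos.
Qed.

Lemma gauss_cdf_ge0 (z : R) : 0 <= gauss_cdf z.
Proof.
  replace 0 with (RInt gauss_pdf z z) by apply (RInt_point (V := R_CompleteNormedModule)).
  apply gauss_cdf_lub; exists z; split; [lra | easy].
Qed.

Lemma gauss_cdf_le (z : R) : gauss_cdf z <= 1 / 2 + gauss_int z / sqrt (2 * PI).
Proof. apply gauss_cdf_lub; intros y [a [_ ->]]; apply RInt_gauss_pdf_le. Qed.

Lemma RInt_gauss_pdf_le_sf (z t : R) : RInt gauss_pdf z t <= 1 - gauss_cdf z.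
Proof.
  assert (Ht : gauss_int t / sqrt (2 * PI) <= 1 / 2).
  { generalize (gauss_int_abs_le t) (Rle_abs (gauss_int t)) sqrt_2PI_ge; intros.
    apply Rle_div_l; lra. }
  generalize (gauss_cdf_le z); rewrite RInt_gauss_pdf; unfold Rdiv in *; lra.
Qed.

Lemma gauss_sf_ge (z c : R) : z <= c -> 0 <= c -> 1 / 2 - c / sqrt (2 * PI) <= 1 - gauss_cdf z.
Proof.
  intros Hzc Hc.
  assert (Hint : gauss_int z <= c)
    by (apply Rle_trans with (gauss_int c);
        [now apply gauss_int_le_mono | now apply gauss_int_le_id]).
  generalize (gauss_cdf_le z) sqrt_2PI_ge; intros.
  enough (gauss_int z / sqrt (2 * PI) <= c / sqrt (2 * PI)) by lra.
  apply Rmult_le_compat_r; [apply Rlt_le, Rinv_0_lt_compat; lra | easy].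
Qed.

Definition mills_lower (x : R) : R := gauss_pdf x * x / (1 + x ^ 2).

Lemma is_derive_opp_mills_lower (x : R) :
  is_derive (fun y => - mills_lower y) x
    (gauss_pdf x * (x ^ 4 + 2 * x ^ 2 - 1) / (1 + x ^ 2) ^ 2).
Proof.
  generalize sqrt_2PI_ge (one_add_sqr_gt0 x); intros.
  unfold mills_lower, gauss_pdf; auto_derive.
  - simpl in *; lra.
  - match goal with |- context [exp ?A] => replace A with (- x ^ 2 / 2) by (simpl; field) end.
    field; lra.
Qed.

Lemma mills_lower_sub_le (z t : R) : z <= t -> mills_lower z - mills_lower t <= RInt gauss_pdf z t.
Proof.
  intros Hzt.
  set (dm x := gauss_pdf x * (x ^ 4 + 2 * x ^ 2 - 1) / (1 + x ^ 2) ^ 2).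
  assert (Hdm : forall x, continuous dm x).
  { intros x; apply (ex_derive_continuous (K := R_AbsRing) (V := R_NormedModule)).
    unfold dm, gauss_pdf; auto_derive; generalize (one_add_sqr_gt0 x); simpl; nra. }
  assert (Hftc : is_RInt dm z t (minus (- mills_lower t) (- mills_lower z))).
  { apply (is_RInt_derive (V := R_CompleteNormedModule) (fun y => - mills_lower y));
      intros; [apply is_derive_opp_mills_lower | apply Hdm]. }
  apply (is_RInt_unique (V := R_CompleteNormedModule)) in Hftc.
  replace (mills_lower z - mills_lower t) with (RInt dm z t)
    by (rewrite Hftc; unfold minus, plus, opp; simpl; ring).
  apply RInt_le; [easy | | apply ex_RInt_gauss_pdf |].
  { apply (ex_RInt_continuous (V := R_CompleteNormedModule)); intros; apply Hdm. }
  (* [dm] is [gauss_pdf] times a factor [((1 + x^2)^2 - 2) / (1 + x^2)^2 <= 1] *)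
  intros x _; unfold dm; generalize (gauss_pdf_pos x) (one_add_sqr_gt0 x); intros.
  apply Rle_div_l; nra.
Qed.

Lemma mills_lower_le_inv (t : R) : 0 < t -> mills_lower t <= / t.
Proof.
  intros Ht; unfold mills_lower.
  generalize (gauss_pdf_le_gauss t) (gauss_le1 t) (gauss_pdf_pos t) (one_add_sqr_gt0 t); intros.
  apply Rle_div_l; [easy |].
  apply Rmult_le_reg_l with t; [easy |]; rewrite <- (Rmult_assoc t (/ t)), Rinv_r by lra.
  nra.
Qed.

Lemma mills_lower_le_sf (z : R) : 0 < z -> mills_lower z <= 1 - gauss_cdf z.
Proof.
  intros Hz; apply Rle_plus_epsilon; intros eps Heps.
  set (t := z + / eps).
  assert (Ht : / t < eps).
  { unfold t; rewrite <- (Rinv_inv eps) at 2.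
    apply Rinv_lt_contravar; [| generalize (Rinv_0_lt_compat _ Heps); lra].
    generalize (Rinv_0_lt_compat _ Heps); nra. }
  assert (Hzt : z <= t) by (generalize (Rinv_0_lt_compat _ Heps); unfold t; lra).
  generalize (mills_lower_sub_le z t Hzt) (RInt_gauss_pdf_le_sf z t)
    (mills_lower_le_inv t ltac:(lra)).
  lra.
Qed.

Lemma exp_le_compat (x y : R) : x <= y -> exp x <= exp y.
Proof. intros [Hlt | ->]; [apply Rlt_le, exp_increasing, Hlt | apply Rle_refl]. Qed.

Lemma Rpower_pos (x a : R) : 0 < Rpower x a.
Proof. apply exp_pos. Qed.

Lemma Rpower_le_Rmax1 (x a : R) : 0 < x -> 0 <= a <= 1 -> Rpower x a <= Rmax 1 x.
Proof.
  intros Hx Ha; destruct (Rle_or_lt x 1) as [Hx1 | Hx1].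
  - apply Rle_trans with 1; [| apply Rmax_l].
    assert (ln x <= 0) by (rewrite <- ln_1; apply ln_le; lra).
    unfold Rpower; rewrite <- exp_0; apply exp_le_compat; nra.
  - apply Rle_trans with x; [| apply Rmax_r].
    rewrite <- (Rpower_1 x) at 2 by lra; apply Rle_Rpower; lra.
Qed.

Lemma Rpower_ge_self (q a : R) : 0 < q <= 1 -> 0 <= a <= 1 -> q <= Rpower q a.
Proof.
  intros Hq Ha.
  assert (ln q <= 0) by (rewrite <- ln_1; apply ln_le; lra).
  rewrite <- (exp_ln q) at 1 by lra; apply exp_le_compat; nra.
Qed.

Lemma abs_rpow_le (z a : R) : 0 <= a <= 1 -> abs_rpow z a <= 1 + z ^ 2 / 2.
Proof.
  intros Ha; unfold abs_rpow; destruct (Req_EM_T z 0) as [_ | Hz]; [nra |].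
  apply Rle_trans with (Rmax 1 (Rabs z)).
  { apply Rpower_le_Rmax1; [now apply Rabs_pos_lt | easy]. }
  rewrite <- (pow2_abs z); apply Rmax_lub; nra.
Qed.

Lemma gauss_pdf_mul_abs_rpow_le (z a : R) :
  0 <= a <= 1 -> gauss_pdf z * abs_rpow z a <= / sqrt (2 * PI).
Proof.
  intros Ha.
  assert (gauss z * abs_rpow z a <= 1).
  { generalize (abs_rpow_le z a Ha) (gauss_mul_one_add_le1 z) (exp_pos (- z ^ 2 / 2)).
    unfold gauss; nra. }
  assert (0 < / sqrt (2 * PI)) by (apply Rinv_0_lt_compat; generalize sqrt_2PI_ge; lra).
  rewrite gauss_pdfE; unfold Rdiv; nra.
Qed.

Lemma exp1_ge : 9 / 4 <= exp 1.
Proof.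
  replace 1 with (1 / 2 + 1 / 2) by field; rewrite exp_plus.
  generalize (exp_ineq1_le (1 / 2)); nra.
Qed.

Lemma mul_exp_neg_sqr_le (s : R) : s * exp (- s ^ 2 / 2) <= 2 / 3.
Proof.
  set (u := exp (- s ^ 2 / 2)); assert (Hu : 0 < u) by apply exp_pos.
  destruct (Rle_or_lt s 0) as [Hs | Hs]; [nra |].
  assert (Hu2 : exp (s ^ 2) * (u * u) = 1).
  { unfold u; rewrite <- !exp_plus, <- exp_0; f_equal; field. }
  (* [e^(s^2) = e * e^(s^2 - 1) >= e * s^2] *)
  assert (Hy : 9 / 4 * s ^ 2 <= exp (s ^ 2)).
  { replace (s ^ 2) with (1 + (s ^ 2 - 1)) at 2 by ring; rewrite exp_plus.
    generalize exp1_ge (exp_ineq1_le (s ^ 2 - 1)) (exp_pos 1); nra. }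
  assert ((s * u) ^ 2 <= 4 / 9) by nra.
  nra.
Qed.

Lemma mul_Rpower_split (p z a : R) : 0 < p -> 0 < z ->
  p * Rpower z a
  = Rpower (p * z / (1 + z ^ 2)) (1 - a) * (Rpower p a * z * Rpower (1 + / z ^ 2) (1 - a)).
Proof.
  intros Hp Hz; generalize (one_add_sqr_gt0 z); intros H1.
  assert (Hz2 : 0 < z ^ 2) by (apply pow_lt; lra).
  replace (1 + / z ^ 2) with ((1 + z ^ 2) / z ^ 2) by (field; lra).
  apply ln_inv; [apply Rmult_lt_0_compat; [easy | apply Rpower_pos] |
                 repeat apply Rmult_lt_0_compat; try apply Rpower_pos; easy |].
  rewrite !ln_mult, !ln_Rpower, !ln_div, ln_mult, ln_pow;
    repeat (apply Rmult_lt_0_compat || apply Rdiv_lt_0_compat || apply Rpower_pos || lra).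
  simpl; ring.
Qed.

Lemma mul_gauss_pdf_Rpower_le (a z : R) : 0 < a < 1 -> 5 / 7 <= z ->
  a * (gauss_pdf z * Rpower z a) <= 2 * Rpower (mills_lower z) (1 - a).
Proof.
  intros Ha Hz.
  rewrite (mul_Rpower_split (gauss_pdf z) z a (gauss_pdf_pos z)) by lra; fold (mills_lower z).
  assert (Hp : a * z * Rpower (gauss_pdf z) a <= 2 / 3).
  { apply Rle_trans with (a * z * exp (- (a * z) ^ 2 / 2)); [| apply mul_exp_neg_sqr_le].
    apply Rmult_le_compat_l; [nra |].
    apply Rle_trans with (Rpower (gauss z) a).
    - apply Rle_Rpower_l; [lra | split; [apply gauss_pdf_pos | apply gauss_pdf_le_gauss]].
    - unfold Rpower, gauss; rewrite ln_exp; apply exp_le_compat; nra. }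
  assert (Hk : Rpower (1 + / z ^ 2) (1 - a) <= 74 / 25).
  { assert (Hz2 : / z ^ 2 <= 49 / 25).
    { rewrite <- (Rinv_inv (49 / 25)); apply Rinv_le_contravar; [lra | simpl; nra]. }
    assert (0 < / z ^ 2) by (apply Rinv_0_lt_compat, pow_lt; lra).
    apply Rle_trans with (Rpower (1 + / z ^ 2) 1); [apply Rle_Rpower | rewrite Rpower_1]; lra. }
  generalize (Rpower_pos (mills_lower z) (1 - a)) (Rpower_pos (gauss_pdf z) a)
    (Rpower_pos (1 + / z ^ 2) (1 - a)); intros.
  assert (a * z * Rpower (gauss_pdf z) a * Rpower (1 + / z ^ 2) (1 - a) <= 2) by nra.
  nra.
Qed.

Lemma abs_rpowE (z a : R) : 0 < z -> abs_rpow z a = Rpower z a.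
Proof.
  intros Hz; unfold abs_rpow; destruct (Req_EM_T z 0); [lra | now rewrite Rabs_right by lra].
Qed.

Lemma gauss_pdf_mul_abs_rpow_le_sf (a z : R) : 0 <= a <= 1 -> z <= 5 / 7 ->
  gauss_pdf z * abs_rpow z a <= 2 * Rpower (1 - gauss_cdf z) (1 - a).
Proof.
  intros Ha Hz; generalize sqrt_2PI_ge; intros Hs.
  assert (Hsf := gauss_sf_ge z (5 / 7) Hz ltac:(lra)).
  assert (Hinv : / sqrt (2 * PI) <= 2 * (1 / 2 - 5 / 7 / sqrt (2 * PI))).
  { apply Rmult_le_reg_l with (sqrt (2 * PI)); [lra |].
    replace (sqrt (2 * PI) * (2 * (1 / 2 - 5 / 7 / sqrt (2 * PI))))
      with (sqrt (2 * PI) - 10 / 7) by (field; lra).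
    rewrite Rinv_r; lra. }
  assert (0 < / sqrt (2 * PI)) by (apply Rinv_0_lt_compat; lra).
  generalize (gauss_pdf_mul_abs_rpow_le z a Ha)
    (Rpower_ge_self (1 - gauss_cdf z) (1 - a) ltac:(generalize (gauss_cdf_ge0 z); lra) ltac:(lra)).
  lra.
Qed.

Lemma mul_gauss_pdf_Rpower_le_sf (a z : R) : 0 < a < 1 -> 5 / 7 <= z ->
  a * (gauss_pdf z * Rpower z a) <= 2 * Rpower (1 - gauss_cdf z) (1 - a).
Proof.
  intros Ha Hz.
  apply Rle_trans with (2 * Rpower (mills_lower z) (1 - a)); [now apply mul_gauss_pdf_Rpower_le |].
  apply Rmult_le_compat_l; [lra |].
  apply Rle_Rpower_l; [lra | split; [| apply mills_lower_le_sf; lra]].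
  apply Rdiv_lt_0_compat; [| apply one_add_sqr_gt0].
  apply Rmult_lt_0_compat; [apply gauss_pdf_pos | lra].
Qed.

Theorem lemma5 (alpha z : R) (Ha0 : 0 < alpha) (Ha1 : alpha < 1) :
  gauss_pdf z * abs_rpow z alpha / Rpower (1 - gauss_cdf z) (1 - alpha)
  <= 2 / alpha.
Proof.
  apply Rle_div_l; [apply Rpower_pos |].
  generalize (Rpower_pos (1 - gauss_cdf z) (1 - alpha)); intros HQ.
  destruct (Rle_or_lt z (5 / 7)) as [Hz | Hz].
  - apply Rle_trans with (2 * Rpower (1 - gauss_cdf z) (1 - alpha)).
    + apply gauss_pdf_mul_abs_rpow_le_sf; lra.
    + apply Rmult_le_compat_r; [lra | apply Rle_div_r; lra].
  - rewrite abs_rpowE by lra; apply Rmult_le_reg_l with alpha; [easy |].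
    replace (alpha * (2 / alpha * Rpower (1 - gauss_cdf z) (1 - alpha)))
      with (2 * Rpower (1 - gauss_cdf z) (1 - alpha)) by (field; lra).
    apply mul_gauss_pdf_Rpower_le_sf; lra.
Qed.
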